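(* Let $R$ be a commutative ring with nonzero identity, $\delta$ an expansion of ideals of $R$, and $I$ a proper ideal of $R$ with $\sqrt{\delta(I)}=\delta(\sqrt{I})$. If $I$ is a $\delta$-$n$-ideal of $R$, then $\sqrt{I}$ is a $\delta$-$n$-ideal of $R$. In particular, $I$ is a quasi $n$-ideal of $R$ if and only if $\sqrt{I}$ is an $n$-ideal of $R$.
   Context: An expansion of ideals of a ring $R$ is a map $\delta$ from the set of ideals of $R$ to itself such that $I\subseteq\delta(I)$ for every ideal $I$, and $\delta(I)\subseteq\delta(J)$ whenever $I\subseteq J$. $\sqrt{0}$ denotes the nilradical of $R$. Given an expansion $\delta$, a proper ideal $I$ of $R$ is a $\delta$-$n$-ideal if whenever $a,b\in R$ with $ab\in I$ and $a\notin\sqrt{0}$, then $b\in\delta(I)$. A quasi $n$-ideal is a $\delta_1$-$n$-ideal, where $\delta_1(J)=\sqrt{J}$. An $n$-ideal is a proper ideal $I$ such that $ab\in I$ and $a\notin\sqrt{0}$ imply $b\in I$. *)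

From mathcomp Require Import all_boot all_algebra.
Set Implicit Arguments. Unset Strict Implicit. Unset Printing Implicit Defensive.
Import GRing.Theory.
Local Open Scope ring_scope.

Section Ideals.
Variable R : comNzRingType.

Definition is_ideal_p (I : R -> Prop) : Prop :=
  I 0 /\ (forall x y, I x -> I y -> I (x - y)) /\ (forall a x, I x -> I (a * x)).

Definition proper_ideal_p (I : R -> Prop) : Prop := is_ideal_p I /\ ~ I 1.

Definition subsetI (I J : R -> Prop) : Prop := forall x, I x -> J x.

Definition radical_set (I : R -> Prop) : R -> Prop := fun x => exists n : nat, I (x ^+ n).

Definition nilradical : R -> Prop := radical_set (fun x => x = 0).

Definition expansion (delta : (R -> Prop) -> (R -> Prop)) : Prop :=
  (forall I, is_ideal_p I -> is_ideal_p (delta I)) /\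
  (forall I, is_ideal_p I -> subsetI I (delta I)) /\
  (forall I J, is_ideal_p I -> is_ideal_p J -> subsetI I J -> subsetI (delta I) (delta J)).

Definition delta_n_ideal (delta : (R -> Prop) -> (R -> Prop)) (I : R -> Prop) : Prop :=
  proper_ideal_p I /\
  (forall a b, I (a * b) -> ~ nilradical a -> delta I b).

Definition quasi_n_ideal (I : R -> Prop) : Prop := delta_n_ideal radical_set I.

Definition n_ideal (I : R -> Prop) : Prop :=
  proper_ideal_p I /\ (forall a b, I (a * b) -> ~ nilradical a -> I b).

End Ideals.

(* If [a * b] lies in [sqrt I], then [a ^+ n * b ^+ n] lies in [I] for some
   [n], and [a ^+ n] is not nilpotent when [a] is not; so [b ^+ n] lies in
   [delta I], i.e. [b] lies in [sqrt (delta I)], which is contained in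
   [delta (sqrt I)].  Only this inclusion is used, not the expansion axioms.
   For [delta = sqrt], [sqrt (sqrt I) = sqrt I] gives the characterisation of
   quasi n-ideals. *)
From mathcomp Require Import all_boot all_algebra.
Import GRing.Theory.
Local Open Scope ring_scope.

Section Radical.
Variable R : comNzRingType.
Implicit Types (I J : R -> Prop) (a x y : R).

Lemma idealD I x y : is_ideal_p I -> I x -> I y -> I (x + y).
Proof.
move=> [I0 [IB _]] Ix Iy.
by have := IB x (0 - y) Ix (IB 0 y I0 Iy); rewrite sub0r opprK.
Qed.

Lemma idealMr I x a : is_ideal_p I -> I x -> I (x * a).
Proof. by move=> [_ [_ IM]] Ix; rewrite mulrC; apply: IM. Qed.

Lemma idealX_leq {I x m n} :
  is_ideal_p I -> I (x ^+ m) -> (m <= n)%N -> I (x ^+ n).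
Proof.
by move=> Iid Ixm le_mn; rewrite -(subnK le_mn) exprD mulrC; apply: idealMr.
Qed.

Lemma radical_setX J x n : radical_set J (x ^+ n) -> radical_set J x.
Proof. by move=> [m Jx]; exists (n * m)%N; rewrite exprM. Qed.

Lemma radical_set_radical J x : radical_set (radical_set J) x -> radical_set J x.
Proof. by move=> [n]; apply: radical_setX. Qed.

Lemma radical_setMl I a x : is_ideal_p I -> radical_set I x -> radical_set I (a * x).
Proof. by move=> [_ [_ IM]] [n Ix]; exists n; rewrite exprMn; apply: IM. Qed.

Lemma radical_setD I x y :
  is_ideal_p I -> radical_set I x -> radical_set I y -> radical_set I (x + y).
Proof.
move=> Iid [m Ix] [k Iy]; exists (m + k)%N; rewrite exprDn.
have [I0 _] := Iid.
apply: (big_ind I) => //; first by move=> *; apply: idealD.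
move=> [i _] _ /=; rewrite -mulr_natr; apply: idealMr => //.
have [le_ki | lt_ik] := leqP k i.
- by rewrite mulrC; apply: idealMr => //; apply: idealX_leq Iid Iy le_ki.
- apply: idealMr => //; apply: (idealX_leq Iid Ix).
  by rewrite -addnBA ?leq_addr // ltnW.
Qed.

Lemma radical_ideal I : is_ideal_p I -> is_ideal_p (radical_set I).
Proof.
move=> Iid; have [I0 _] := Iid; split; first by exists 1%N; rewrite expr1.
split=> [x y Ix Iy | a x]; last exact: radical_setMl.
by apply: radical_setD => //; rewrite -mulN1r; apply: radical_setMl.
Qed.

Lemma radical_proper I : proper_ideal_p I -> proper_ideal_p (radical_set I).
Proof.
by move=> [Iid I1]; split; [exact: radical_ideal | move=> [n]; rewrite expr1n].
Qed.

Lemma radical_delta_n_ideal {delta : (R -> Prop) -> R -> Prop} {I} :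
  (forall x, radical_set (delta I) x -> delta (radical_set I) x) ->
  delta_n_ideal delta I -> delta_n_ideal delta (radical_set I).
Proof.
move=> sub_delta [Iproper Idelta]; split; first exact: radical_proper.
move=> a b [n Iab] nil_a; apply: sub_delta; exists n.
apply: (Idelta (a ^+ n)); first by rewrite -exprMn.
by move/radical_setX.
Qed.

Lemma quasi_n_idealE I :
  proper_ideal_p I -> quasi_n_ideal I <-> n_ideal (radical_set I).
Proof.
move=> Iproper; split=> [quasiI | [_ nI]].
- have [radI_proper radI_n] := radical_delta_n_ideal (fun _ => id) quasiI.
  split=> // a b ab_rad nil_a.
  exact/radical_set_radical/(radI_n a b ab_rad nil_a).
- by split=> // a b Iab; apply: nI; exists 1%N; rewrite expr1.
Qed.

End Radical.

Theorem proposition2p17 (R : comNzRingType) (I : R -> Prop) (hI : proper_ideal_p I) :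
  (forall delta : (R -> Prop) -> (R -> Prop),
      expansion delta ->
      (forall x, radical_set (delta I) x <-> delta (radical_set I) x) ->
      delta_n_ideal delta I -> delta_n_ideal delta (radical_set I)) /\
  (quasi_n_ideal I <-> n_ideal (radical_set I)).
Proof.
split; last exact: quasi_n_idealE.
by move=> delta _ rad_delta; apply: radical_delta_n_ideal => x /rad_delta.
Qed.
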